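(* Let $(x_n)_n$ and $(y_n)_n$ be bounded sequences in a Banach space $X$. (a) If $\sum_n\|x_n-y_n\|<\infty$, then $\{x_n\}_n$ is a Banach-Saks set if and only if $\{y_n\}_n$ is a Banach-Saks set. (b) $\mathrm{conv}(\{x_n\}_n)$ is a Banach-Saks set if and only if every block sequence in $\mathrm{conv}(\{x_n\}_n)$ has the Banach-Saks property (i.e. forms a Banach-Saks set).
   Context: A subset $A$ of a Banach space is a Banach-Saks set if every sequence in $A$ has a subsequence $(z_n)_n$ whose Ces\`aro means $\frac1n\sum_{k=1}^n z_k$ converge in norm. A block sequence in $\mathrm{conv}(\{x_n\}_n)$ is a sequence $(z_m)_m$ with $z_m=\sum_{k\in F_m}\lambda^{(m)}_k x_k$, where each $(\lambda^{(m)}_k)_{k\in F_m}$ is a convex combination and $F_1<F_2<\cdots$ are finite subsets of $\mathbb N$ ($F<G$ means $\max F<\min G$). *)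

(* real Banach space = completeNormedModType over R : realType *)
From HB Require Import structures.
From mathcomp Require Import all_boot all_order all_algebra.
From mathcomp Require Import all_classical all_reals all_analysis.
Set Implicit Arguments. Unset Strict Implicit. Unset Printing Implicit Defensive.
Import Order.TTheory GRing.Theory Num.Theory.
Import numFieldNormedType.Exports.
Local Open Scope classical_set_scope.
Local Open Scope ring_scope.

Section BS.
Variables (R : realType) (X : normedModType R).

Definition cesaro (z : nat -> X) (n : nat) : X :=
  (n.+1%:R)^-1 *: \sum_(k < n.+1) z k.

Definition banach_saks_set (A : set X) : Prop :=
  forall u : nat -> X, (forall n, A (u n)) ->
    exists phi : nat -> nat, (forall n, (phi n < phi n.+1)%N) /\
      exists l : X, cesaro (u \o phi) @ \oo --> l.

Definition bounded_seq (x : nat -> X) : Prop :=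
  exists M : R, forall n, `|x n| <= M.

Definition conv_seq (x : nat -> X) : set X :=
  [set z | exists (N : nat) (lam : nat -> R),
     [/\ forall k, 0 <= lam k, \sum_(k < N) lam k = 1
       & z = \sum_(k < N) lam k *: x k]].

Definition block_seq (x : nat -> X) (z : nat -> X) : Prop :=
  exists (F : nat -> seq nat) (lam : nat -> nat -> R),
    forall m,
    [/\ uniq (F m),
        forall k, k \in F m -> 0 <= lam m k,
        \sum_(k <- F m) lam m k = 1,
        z m = \sum_(k <- F m) lam m k *: x k
      & forall i j, i \in F m -> j \in F m.+1 -> (i < j)%N].

End BS.

From Pilot Require Import Defs.
From HB Require Import structures.
From mathcomp Require Import all_boot all_order all_algebra.
From mathcomp Require Import all_classical all_reals all_analysis.
From mathcomp Require Import lra.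
Import Order.TTheory GRing.Theory Num.Theory.
Import numFieldNormedType.Exports.
Local Open Scope classical_set_scope.
Local Open Scope ring_scope.
Set Implicit Arguments. Unset Strict Implicit.

(* (a) When x_n - y_n -> 0, a sequence in {x_n} either takes one value infinitely
   often, and so has a constant subsequence, or it is x_(k_n) with k_n -> oo; it then
   differs by a null sequence from y_(k_n), and null sequences have null Cesaro means.
   (b) Block sequences lie in conv{x_n}. Conversely, write u_n = sum_k lam^n_k x_k.
   By Tychonoff the coefficient rows have a coordinatewise cluster point mu with
   sum_k mu_k <= 1, and a diagonal extraction splits u_(n_j) into a part converging to
   sum_k mu_k x_k plus t b_j, with (b_j) a block sequence and t = 1 - sum_k mu_k; a
   Banach-Saks subsequence of (b_j) is then one of (u_(n_j)). *)

Section Cesaro.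
Variables (R : realType) (X : normedModType R).
Implicit Types (u v : nat -> X).

Lemma cesaroD u v n : Defs.cesaro (u \+ v) n = Defs.cesaro u n + Defs.cesaro v n.
Proof. by rewrite /Defs.cesaro big_split /= scalerDr. Qed.

Lemma cesaroZ (c : R) u n : Defs.cesaro (c \*: u) n = c *: Defs.cesaro u n.
Proof. by rewrite /Defs.cesaro -scaler_sumr !scalerA mulrC. Qed.

Lemma cesaro_cst (l : X) n : Defs.cesaro (cst l) n = l.
Proof.
rewrite /Defs.cesaro sumr_const card_ord -[l *+ _]scaler_nat scalerA.
by rewrite mulVf ?scale1r ?pnatr_eq0.
Qed.

Lemma cesaro_cvg u (l : X) : u @ \oo --> l -> Defs.cesaro u @ \oo --> l.
Proof.
move=> ul; apply/subr_cvg0; apply: norm_cvg0.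
have dist_cvg0 : (fun k => `|u k - l|) @ \oo --> (0 : R).
  exact/norm_cvg0P/subr_cvg0.
apply: (squeeze_cvgr _ (cvg_cst 0) (sequences.cesaro dist_cvg0)).
near=> n; rewrite normr_ge0 /=.
have -> : Defs.cesaro u n - l = Defs.cesaro (fun k => u k - l) n.
  by rewrite (cesaroD u (cst (- l))) cesaro_cst.
rewrite normrZ ger0_norm ?invr_ge0// ler_wpM2l ?invr_ge0//.
by rewrite /series /= big_mkord ler_norm_sum.
Unshelve. all: end_near. Qed.

End Cesaro.

Lemma norm_le_cvg0 (R : realType) (V : normedModType R) (f : nat -> V) (g : nat -> R) :
  (forall n, `|f n| <= g n) -> g @ \oo --> 0 -> f @ \oo --> 0.
Proof.
move=> f_le g_cvg0; apply: norm_cvg0.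
apply: (squeeze_cvgr _ (cvg_cst 0) g_cvg0).
by apply: nearW => n; rewrite normr_ge0 f_le.
Qed.

Section Subsequences.
Implicit Types (phi k : nat -> nat).

Definition strictly_increasing phi := forall n, (phi n < phi n.+1)%N.

Lemma strictly_increasing_homo phi : strictly_increasing phi ->
  {homo phi : m n / (m < n)%N}.
Proof. exact: homo_ltn ltn_trans. Qed.

Lemma strictly_increasing_comp phi psi : strictly_increasing phi ->
  strictly_increasing psi -> strictly_increasing (phi \o psi).
Proof. by move=> /strictly_increasing_homo phiI psiI n; apply: phiI. Qed.

Lemma strictly_increasing_geq phi : strictly_increasing phi -> forall n, (n <= phi n)%N.
Proof. by move=> phiI; elim=> // n IH; apply: leq_ltn_trans IH (phiI n). Qed.

Lemma strictly_increasing_cvgny phi : strictly_increasing phi -> phi @ \oo --> \oo.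
Proof.
move=> /strictly_increasing_geq phi_geq; apply/cvgnyPge => A.
by near=> n; apply: leq_trans (phi_geq n); near: n; exact: nbhs_infty_ge.
Unshelve. all: end_near. Qed.

Lemma infinitely_often_subseq (P : nat -> Prop) :
  (forall N, exists n, (N <= n)%N /\ P n) ->
  exists phi, strictly_increasing phi /\ forall n, P (phi n).
Proof.
move=> /choice[g gP].
pose phi := fix phi n := if n is m.+1 then g (phi m).+1 else g 0%N.
by exists phi; split=> [n|[|n]]; [exact: (gP _).1 | exact: (gP _).2 | exact: (gP _).2].
Qed.

Lemma nat_seq_const_subseq_or_cvgny k :
  (exists m phi, strictly_increasing phi /\ forall n, k (phi n) = m) \/ k @ \oo --> \oo.
Proof.
have [[m m_often]|rare] := pselect (exists m, forall N, exists n, (N <= n)%N /\ k n = m).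
  by left; exists m; exact: (infinitely_often_subseq m_often).
right; apply/cvgnyPge; elim=> [|A IH]; first exact: nearW.
have [N hN] : exists N, ~ exists n, (N <= n)%N /\ k n = A.
  by apply/existsNP => often; apply: rare; exists A.
near=> n; rewrite ltn_neqAle eq_sym; apply/andP; split; last by near: n.
apply/eqP => knA; apply: hN; exists n; split=> //; near: n; exact: nbhs_infty_ge.
Unshelve. all: end_near. Qed.

End Subsequences.

Section BanachSaks.
Variables (R : realType) (X : normedModType R).

Lemma banach_saks_subset (A B : set X) :
  A `<=` B -> banach_saks_set B -> banach_saks_set A.
Proof. by move=> AB hB u uA; apply: hB => n; apply: AB. Qed.

Lemma banach_saks_range_perturb (x y : nat -> X) :
  (fun n => x n - y n) @ \oo --> 0 ->
  banach_saks_set (range y) -> banach_saks_set (range x).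
Proof.
move=> xy_cvg0 BSy u ux.
have /choice[k kP] : forall n, exists m, x m = u n.
  by move=> n; have [m _ <-] := ux n; exists m.
have u_xk : u = x \o k by apply/funext => n; rewrite /= kP.
case: (nat_seq_const_subseq_or_cvgny k) => [[m [phi [phiI kphi]]]|k_cvgny].
  exists phi; split=> //; exists (x m).
  have -> : Defs.cesaro (u \o phi) = cst (x m).
    apply/funext => n; rewrite -(cesaro_cst (x m) n) u_xk; congr Defs.cesaro.
    by apply/funext => j /=; rewrite kphi.
  exact: cvg_cst.
have [phi [phiI [l ycvg]]] := BSy (y \o k) (fun n => ex_intro2 _ _ (k n) I erefl).
exists phi; split=> //; exists (l + 0).
have -> : Defs.cesaro (u \o phi) =
    Defs.cesaro ((y \o k) \o phi) \+ Defs.cesaro ((fun n => x n - y n) \o k \o phi).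
  apply/funext => n; rewrite /= -cesaroD u_xk; congr Defs.cesaro.
  by apply/funext => j /=; rewrite addrC subrK.
apply: cvgD => //; apply/cesaro_cvg/(cvg_comp _ _ (strictly_increasing_cvgny phiI)).
exact: cvg_comp k_cvgny xy_cvg0.
Qed.

End BanachSaks.

Section Cluster.
Variable R : realType.
Implicit Types (L : nat -> nat -> R) (mu : nat -> R).

Definition coord_cluster L mu := forall p (d : R), 0 < d -> forall N, exists n,
  (N <= n)%N /\ forall k, (k < p)%N -> `|L n k - mu k| < d.

Section UnitCube.
Import ArrowAsProduct.

(* Tychonoff: [mu] is a cluster point of the filter [L @ \oo] in the product [[0, 1]^nat]. *)
Lemma unit_cube_cluster L : (forall n k, 0 <= L n k <= 1) ->
  exists mu, (forall k, 0 <= mu k <= 1) /\ coord_cluster L mu.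
Proof.
move=> L01.
pose cube := [set f : nat -> R | forall i, `[0, 1]%classic (f i)].
have cube_compact : compact cube.
  exact: (@tychonoff nat (fun=> R) (fun=> `[0, 1]%classic) (fun=> @segment_compact R 0 1)).
have L_cube : (L @ \oo) cube by exists 0%N => // n _ i; rewrite /= in_itv /=; exact: L01.
have [mu [mu_cube mu_cluster]] := cube_compact _ (fmap_proper_filter _ _) L_cube.
exists mu; split=> [k|p d d_gt0 N].
  by have := mu_cube k; rewrite /= in_itv.
pose PT := prod_topology (fun _ : nat => R).
have near_mu : nbhs (mu : PT) [set f : PT | forall k, (k < p)%N -> `|f k - mu k| < d].
  elim: p => [|p IH]; first by apply: filterE => f k; rewrite ltn0.
  have /cvgrPdist_lt/(_ d d_gt0) near_p := @proj_continuous nat (fun=> R) p mu.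
  apply: filterS2 IH near_p => f close_p close_Sp k.
  rewrite ltnS leq_eqVlt => /orP[/eqP->|]; [by rewrite distrC | exact: close_p].
have L_tail : (L @ \oo) (L @` [set n | (N <= n)%N]) by exists N => // n /= Nn; exists n.
by have [f [[n /= Nn <-] close]] := mu_cluster _ _ L_tail near_mu; exists n.
Qed.

End UnitCube.

Lemma coord_cluster_series_le L mu (c : R) : coord_cluster L mu ->
  (forall n q, series (L n) q <= c) -> forall q, series mu q <= c.
Proof.
move=> L_mu L_le q; apply/ler_addgt0Pr => e e_gt0.
pose d := e / q.+1%:R.
have d_gt0 : 0 < d by rewrite divr_gt0 ?ltr0n.
have [n [_ close]] := L_mu q d d_gt0 0%N.
have mu_le : series mu q <= \sum_(0 <= k < q) (L n k + d).
  rewrite /series /= big_nat_cond [leRHS]big_nat_cond.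
  apply: ler_sum => k /andP[/andP[_ kq] _].
  by have := close k kq; rewrite ltr_distl => /andP[+ _]; lra.
rewrite big_split /= sumr_const_nat subn0 in mu_le.
apply: (le_trans mu_le); apply: lerD; first exact: L_le.
rewrite /d -[_ *+ q]mulr_natr -mulrA ler_piMr ?ltW // mulrC.
by rewrite ltr_pdivrMr ?ltr0n // mul1r ltr_nat.
Qed.

Lemma sum_lt_inv_sqr (f : nat -> R) p :
  (forall k, (k < p)%N -> f k < (p.+1%:R ^+ 2)^-1) ->
  \sum_(0 <= k < p) f k <= p.+1%:R^-1.
Proof.
move=> f_lt; apply: (@le_trans _ _ (\sum_(0 <= k < p) (p.+1%:R ^+ 2)^-1)).
  rewrite big_nat_cond [leRHS]big_nat_cond; apply: ler_sum => k /andP[/andP[_ kp] _].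
  exact/ltW/f_lt.
rewrite sumr_const_nat subn0 -[_ *+ p]mulr_natr expr2 invfM -mulrA ler_piMr ?invr_ge0 //.
by rewrite mulrC ler_pdivrMr ?ltr0n // mul1r ler_nat.
Qed.

(* The windows [[0, pp j)] grow while the row [nn j] gets [1/(pp j + 1)]-close
   to [mu] on them in l^1. *)
Lemma coord_cluster_diagonal L mu (N : nat -> nat) : coord_cluster L mu ->
  exists nn pp : nat -> nat, [/\ strictly_increasing nn, strictly_increasing pp,
    forall j, (N (nn j) <= pp j.+1)%N
    & (fun j => \sum_(0 <= k < pp j) `|L (nn j) k - mu k|) @ \oo --> 0].
Proof.
move=> L_mu.
have /choice[g gP] : forall pN : nat * nat, exists n, (pN.2 <= n)%N /\
    forall k, (k < pN.1)%N -> `|L n k - mu k| < (pN.1.+1%:R ^+ 2)^-1.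
  by move=> [p N0]; apply: L_mu; rewrite invr_gt0 exprn_gt0 ?ltr0n.
pose next pn := let p := maxn (N pn.2) pn.1.+1 in (p, g (p, pn.2.+1)).
pose st := fix st j := if j is j'.+1 then next (st j') else (0%N, g (0%N, 0%N)).
exists (fun j => (st j).2), (fun j => (st j).1); split=> [j|j|j|] /=.
- exact: (gP (_, _)).1.
- by rewrite leq_max ltnSn orbT.
- exact: leq_maxl.
apply: (@squeeze_cvgr _ _ _ _ (fun=> 0) (fun j => harmonic (st j).1)).
- apply: nearW => j; rewrite sumr_ge0 //=; apply: sum_lt_inv_sqr.
  by case: j => [|j]; [exact: (gP (0, 0)%N).2 | exact: (gP ((st j.+1).1, (st j).2.+1)).2].
- exact: cvg_cst.
- apply: cvg_comp cvg_harmonic; apply: strictly_increasing_cvgny => j /=.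
  by rewrite leq_max ltnSn orbT.
Qed.

End Cluster.

Lemma big_ord_mem_seq (V : nmodType) (f : nat -> V) (s : seq nat) N : uniq s ->
  (forall k, k \in s -> (k < N)%N) ->
  \sum_(k < N) (if (k : nat) \in s then f k else 0) = \sum_(k <- s) f k.
Proof.
move=> s_uniq s_lt; rewrite -(big_mkord xpredT (fun k => if k \in s then f k else 0)).
rewrite -big_mkcond -big_filter.
apply/perm_big/uniq_perm => //; first by rewrite filter_uniq ?iota_uniq.
by move=> k; rewrite mem_filter mem_index_iota; case: (boolP (k \in s)) => // /s_lt ->.
Qed.

Lemma sum_widen_if (V : nmodType) (f : nat -> V) q Q : (q <= Q)%N ->
  \sum_(0 <= k < Q) (if (k < q)%N then f k else 0) = \sum_(k < q) f k.
Proof. by move=> qQ; rewrite big_mkord -big_mkcond (big_ord_widen _ _ qQ). Qed.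

Section ConvexCombinations.
Variables (R : realType) (X : normedModType R).
Implicit Types (x : nat -> X).

Lemma block_seq_sub_conv x z : block_seq x z -> range z `<=` conv_seq x.
Proof.
move=> [F [lam blk]] _ [m _ <-]; have [F_uniq lam_ge0 lam_sum -> _] := blk m.
have F_lt k : k \in F m -> (k < (\max_(i <- F m) i).+1)%N.
  by move=> kF; rewrite ltnS (@leq_bigmax_seq _ (F m) xpredT id k kF).
exists (\max_(i <- F m) i).+1, (fun k => if k \in F m then lam m k else 0); split.
- by move=> k; case: ifP => // /lam_ge0.
- by rewrite big_ord_mem_seq.
- rewrite -(big_ord_mem_seq _ F_uniq F_lt); apply: eq_bigr => k _.
  by case: ifP; rewrite ?scale0r.
Qed.

(* Padded by zeros, the coefficients represent [z] on every long enough initial segment. *)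
Lemma conv_seq_coefs x z : conv_seq x z -> exists (N : nat) (lam : nat -> R),
  (forall k, 0 <= lam k) /\ forall Q, (N <= Q)%N ->
    series lam Q = 1 /\ z = series (fun k => lam k *: x k) Q.
Proof.
move=> [N [lam [lam_ge0 lam_sum ->]]].
exists N, (fun k => if (k < N)%N then lam k else 0); split=> [k|Q NQ].
  by case: ifP.
rewrite /series /= sum_widen_if //; split=> //.
rewrite -(sum_widen_if (fun k => lam k *: x k) NQ); apply: eq_bigr => k _.
by case: ifP; rewrite ?scale0r.
Qed.

End ConvexCombinations.

Section Blocks.
Variables (R : realType) (X : normedModType R) (x : nat -> X) (M : R).
Hypothesis x_le : forall n, `|x n| <= M.

(* On a segment of zero mass the block is [x (pp j)] itself. *)
Lemma block_seq_of_segments (pp : nat -> nat) (lam : nat -> nat -> R) :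
  strictly_increasing pp -> (forall j k, 0 <= lam j k) ->
  exists b, [/\ block_seq x b, forall j, `|b j| <= M &
    forall j, (\sum_(pp j <= k < pp j.+1) lam j k) *: b j =
              \sum_(pp j <= k < pp j.+1) lam j k *: x k].
Proof.
move=> ppI lam_ge0.
pose T j := \sum_(pp j <= k < pp j.+1) lam j k.
have T_ge0 j : 0 <= T j by apply: sumr_ge0.
pose F j := if T j == 0 then [:: pp j] else index_iota (pp j) (pp j.+1).
pose w j k := if T j == 0 then 1 else lam j k / T j.
have F_seg j i : i \in F j -> (pp j <= i < pp j.+1)%N.
  rewrite /F; case: eqP => _; last by rewrite mem_index_iota.
  by rewrite inE => /eqP ->; rewrite leqnn ppI.
exists (fun j => \sum_(k <- F j) w j k *: x k); split=> [|j|j].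
- exists F, w => j; split.
  + by rewrite /F; case: eqP => _ //; exact: iota_uniq.
  + by move=> k _; rewrite /w; case: eqP => _ //; rewrite divr_ge0.
  + rewrite /F /w; case: eqP => [_|/eqP T_neq0]; first by rewrite big_seq1.
    by rewrite -mulr_suml mulfV.
  + by [].
  + by move=> i i' /F_seg/andP[_ i_lt] /F_seg/andP[i'_ge _]; exact: leq_trans i_lt i'_ge.
- rewrite /F /w; case: eqP => [_|/eqP T_neq0]; first by rewrite big_seq1 scale1r.
  apply: le_trans (ler_norm_sum _ _ _) _.
  apply: (@le_trans _ _ (\sum_(pp j <= k < pp j.+1) lam j k / T j * M)).
    by apply: ler_sum => k _; rewrite normrZ ger0_norm ?divr_ge0 // ler_wpM2l ?divr_ge0.
  by rewrite -!mulr_suml -/(T j) mulfV ?mul1r.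
- rewrite /F /w -/(T j); case: eqP => [T0|/eqP T_neq0].
    rewrite T0 scale0r; apply/esym/big1_seq => k /andP[_ k_in].
    move/eqP: T0; rewrite psumr_eq0 => [/allP/(_ k k_in)/implyP/(_ isT)/eqP->|i _ //].
    by rewrite scale0r.
  rewrite scaler_sumr; apply: eq_bigr => k _.
  by rewrite scalerA mulrCA mulfV ?mulr1.
Qed.

End Blocks.

Section Decomposition.
Variables (R : realType) (X : completeNormedModType R) (x : nat -> X) (M : R).
Hypothesis x_le : forall n, `|x n| <= M.

Lemma coefs_cluster_series_cvg (Lam : nat -> nat -> R) :
  (forall n k, 0 <= Lam n k) -> (forall n q, series (Lam n) q <= 1) ->
  exists mu, [/\ coord_cluster Lam mu, cvgn (series mu)
    & cvgn (series (fun k => mu k *: x k))].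
Proof.
move=> Lam_ge0 Lam_le1.
have Lam01 n k : 0 <= Lam n k <= 1.
  rewrite Lam_ge0; apply: le_trans (Lam_le1 n k.+1).
  by rewrite seriesSr lerDr; apply: sumr_ge0 => i _.
have [mu [mu01 Lam_mu]] := unit_cube_cluster Lam01.
have mu_ge0 k : 0 <= mu k by case/andP: (mu01 k).
have mu_cvg : cvgn (series mu).
  apply: nondecreasing_is_cvgn; first exact: nondecreasing_series.
  by exists 1 => _ [n _ <-]; exact: coord_cluster_series_le Lam_mu Lam_le1 n.
exists mu; split=> //.
apply/normed_cvg/(@series_le_cvg _ _ (fun k => M * mu k)) => [k|k|k|].
- exact: normr_ge0.
- by rewrite mulr_ge0 // (le_trans _ (x_le 0%N)).
- by rewrite /= normrZ ger0_norm // mulrC ler_wpM2r.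
- exact: is_cvg_seriesZ.
Qed.

(* The head of [u (nn j)] tends to [a = \sum_k mu_k x_k]; its tail has mass
   tending to [t = 1 - \sum_k mu_k]. *)
Lemma conv_subseq_cvg_add_block (u : nat -> X) : (forall n, conv_seq x (u n)) ->
  exists nn, strictly_increasing nn /\ exists (c b : nat -> X) (a : X) (t : R),
    [/\ c @ \oo --> a, block_seq x b & forall j, u (nn j) = c j + t *: b j].
Proof.
move=> u_conv.
have M_ge0 : 0 <= M := le_trans (normr_ge0 _) (x_le 0%N).
have /choice[N /choice[Lam LamP]] := fun n => conv_seq_coefs (u_conv n).
have Lam_ge0 n := (LamP n).1.
have Lam_le1 n q : series (Lam n) q <= 1.
  have [<- _] := (LamP n).2 _ (leq_maxr q (N n)).
  exact: nondecreasing_series (leq_maxl _ _).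
have [mu [Lam_mu mu_cvg mux_cvg]] := coefs_cluster_series_cvg Lam_ge0 Lam_le1.
have [nn [pp [nnI ppI N_le D_cvg0]]] := coord_cluster_diagonal N Lam_mu.
have [b [b_blk b_le Tb]] := block_seq_of_segments x_le ppI (fun j => Lam_ge0 (nn j)).
pose D j := \sum_(0 <= k < pp j) `|Lam (nn j) k - mu k|.
pose T j := \sum_(pp j <= k < pp j.+1) Lam (nn j) k.
pose head j := series (fun k => Lam (nn j) k *: x k) (pp j).
pose t := 1 - limn (series mu).
have head_tail j : u (nn j) = head j + T j *: b j.
  have [_ ->] := (LamP (nn j)).2 _ (N_le j).
  by rewrite Tb /head /series /= -big_cat_nat ?(ltnW (ppI j)).
have T_mass j : T j = 1 - series (Lam (nn j)) (pp j).
  have [<- _] := (LamP (nn j)).2 _ (N_le j).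
  by rewrite /series /= (big_cat_nat (leq0n _) (ltnW (ppI j))) /= addrC addrK.
have pp_cvg := strictly_increasing_cvgny ppI.
have head_cvg : head @ \oo --> limn (series (fun k => mu k *: x k)).
  apply: cvg_sub0 (cvg_comp _ _ pp_cvg mux_cvg).
  apply: (norm_le_cvg0 (g := fun j => D j * M)); last first.
    by rewrite -(mul0r M); apply: cvgM => //; exact: cvg_cst.
  move=> j; rewrite /head /series /= !fctE -sumrB mulr_suml.
  apply: le_trans (ler_norm_sum _ _ _) _.
  by apply: ler_sum => k _; rewrite -scalerBl normrZ ler_wpM2l.
have T_cvg : T @ \oo --> t.
  rewrite (funext T_mass); apply: cvgB; first exact: cvg_cst.
  apply: cvg_sub0 (cvg_comp _ _ pp_cvg mu_cvg); apply: norm_le_cvg0 D_cvg0 => j.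
  by rewrite /series /= !fctE -sumrB ler_norm_sum.
have Tb_cvg0 : (fun j => (T j - t) *: b j) @ \oo --> 0.
  apply: (norm_le_cvg0 (g := fun j => `|T j - t| * M)) => [j|].
    by rewrite normrZ ler_wpM2l.
  rewrite -(mul0r M); apply: cvgM; last exact: cvg_cst.
  exact/norm_cvg0P/subr_cvg0.
exists nn; split=> //; exists (fun j => head j + (T j - t) *: b j), b.
exists (limn (series (fun k => mu k *: x k))), t; split=> // [|j].
  by rewrite -[X in _ --> X]addr0; apply: cvgD.
by rewrite head_tail -addrA -scalerDl subrK.
Qed.

End Decomposition.

Lemma banach_saks_conv_of_blocks (R : realType) (X : completeNormedModType R) (x : nat -> X) :
  bounded_seq x -> (forall z, block_seq x z -> banach_saks_set (range z)) ->
  banach_saks_set (conv_seq x).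
Proof.
move=> [M x_le] blocks_BS u u_conv.
have [nn [nnI [c [b [a [t [c_cvg b_blk u_cb]]]]]]] := conv_subseq_cvg_add_block x_le u_conv.
have [phi [phiI [l b_cesaro]]] := blocks_BS b b_blk b (fun n => ex_intro2 _ _ n I erefl).
exists (nn \o phi); split; first exact: strictly_increasing_comp.
exists (a + t *: l).
have -> : Defs.cesaro (u \o (nn \o phi)) =
    Defs.cesaro (c \o phi) \+ t \*: Defs.cesaro (b \o phi).
  apply/funext => n; rewrite /= -cesaroZ -cesaroD; congr Defs.cesaro.
  by apply/funext => j /=; exact: u_cb.
apply: cvgD; first exact/cesaro_cvg/(cvg_comp _ _ (strictly_increasing_cvgny phiI) c_cvg).
exact: cvgZr.
Qed.

Unset Implicit Arguments.

Theorem lemma2p9 (R : realType) (X : completeNormedModType R) (x y : nat -> X) :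
  bounded_seq x -> bounded_seq y ->
  ((cvg (series (fun n => `|x n - y n|) @ \oo) ->
      (banach_saks_set (range x) <-> banach_saks_set (range y)))
   /\
   (banach_saks_set (conv_seq x) <->
      (forall z : nat -> X, block_seq x z -> banach_saks_set (range z)))).
Proof.
move=> x_bdd _; split.
  move=> /cvg_series_cvg_0 dist_cvg0.
  have xy_cvg0 : (fun n => x n - y n) @ \oo --> 0 by exact: norm_cvg0.
  have yx_cvg0 : (fun n => y n - x n) @ \oo --> 0.
    by apply: norm_cvg0; under eq_fun do rewrite distrC.
  by split; apply: banach_saks_range_perturb.
split=> [conv_BS z /block_seq_sub_conv z_conv|]; last exact: banach_saks_conv_of_blocks.
exact: banach_saks_subset conv_BS.
Qed.
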